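(* Let $p\ge5$ be prime and $f$ a modular form of weight $k$ on $\mathrm{SL}_2(\mathbb{Z})$ with integer Fourier coefficients. Then $D^{p^2}f$ is a modular form mod $p^2$; that is, the image of $D^{p^2}f\in\mathbb{Z}_{(p)}[P,Q,R]$ in $(\mathbb{Z}/p^2\mathbb{Z})[P,Q,R]$ lies in $(\mathbb{Z}/p^2\mathbb{Z})[Q,R]$.
   Context: $\mathbb{Z}_{(p)}$ is the localization of $\mathbb{Z}$ at $p$. $P=E_2,Q=E_4,R=E_6$ are the normalized Eisenstein series; quasimodular forms are identified with their unique polynomial expressions in $P,Q,R$, so $f\in\mathbb{Z}_{(p)}[Q,R]$. $D=q\frac{d}{dq}$ acts on $\mathbb{Z}_{(p)}[P,Q,R]$ as the derivation with $DP=\frac{P^2-Q}{12}$, $DQ=\frac{PQ-R}{3}$, $DR=\frac{PR-Q^2}{2}$. *)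

From HB Require Import structures.
From mathcomp Require Import all_boot all_order all_algebra.
From mathcomp Require Import mpoly.
Set Implicit Arguments. Unset Strict Implicit. Unset Printing Implicit Defensive.
Import Order.TTheory GRing.Theory Num.Theory.
Local Open Scope ring_scope.

(* Quasimodular forms are polynomials in P = E2, Q = E4, R = E6, i.e.
   elements of {mpoly rat[3]}; variable 0 is P, 1 is Q, 2 is R. *)
Definition vP : 'I_3 := @Ordinal 3 0 isT.
Definition vQ : 'I_3 := @Ordinal 3 1 isT.
Definition vR : 'I_3 := @Ordinal 3 2 isT.

(* The derivation D = q d/dq on Q[P,Q,R]:
   D g = dg/dP * (P^2 - Q)/12 + dg/dQ * (PQ - R)/3 + dg/dR * (PR - Q^2)/2. *)
Definition Dimg (i : 'I_3) : {mpoly rat[3]} :=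
  if i == vP then (12%:R)^-1 *: ('X_vP ^+ 2 - 'X_vQ)
  else if i == vQ then (3%:R)^-1 *: ('X_vP * 'X_vQ - 'X_vR)
  else (2%:R)^-1 *: ('X_vP * 'X_vR - 'X_vQ ^+ 2).

Definition Dq (g : {mpoly rat[3]}) : {mpoly rat[3]} :=
  \sum_(i < 3) mderiv i g * Dimg i.

Definition sigma (j m : nat) : nat := \sum_(d <- divisors m) d ^ j.

Definition Etrunc (c : int) (j N : nat) : {poly rat} :=
  1 + \sum_(1 <= m < N.+1) ((c%:~R * (sigma j m)%:R) *: 'X^m).

(* E2 = 1 - 24 sum sigma_1, E4 = 1 + 240 sum sigma_3, E6 = 1 - 504 sum sigma_5 *)
Definition Eis_trunc (N : nat) (i : 'I_3) : {poly rat} :=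
  if i == vP then Etrunc (-24) 1 N
  else if i == vQ then Etrunc 240 3 N
  else Etrunc (-504) 5 N.

Definition qcoef (g : {mpoly rat[3]}) (n : nat) : rat :=
  (mmap (@polyC rat) (Eis_trunc n) g)`_n.

Definition is_modform (k : nat) (g : {mpoly rat[3]}) : Prop :=
  forall m : 'X_{1..3}, m \in msupp g -> m vP = 0%N /\ (4 * m vQ + 6 * m vR)%N = k.

Definition in_Zp (p : nat) (x : rat) : bool := ~~ (p %| `|denq x|)%N.
Definition in_pZp (p e : nat) (x : rat) : bool :=
  in_Zp p x && (p ^ e %| `|numq x|)%N.

From HB Require Import structures.
From mathcomp Require Import all_boot all_order all_algebra.
From mathcomp Require Import mpoly.
From mathcomp Require Import ring zify.
Set Implicit Arguments.
Unset Strict Implicit.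
Unset Printing Implicit Defensive.
Import GRing.Theory Num.Theory.
Local Open Scope ring_scope.

(* D only introduces the denominators 2, 3 and 12, so it preserves Z_(p)[P,Q,R]
   for p >= 5; this gives the integrality of D^(p^2) f.
   Write E = P/12.  The Serre derivative  serre w h = D h - w E h  maps modular
   forms of weight w to modular forms of weight w + 2, so the forms
     G_0 = f,   G_(m+1) = serre (k + 2m) G_m - m (k + m - 1) Q/144 G_(m-1)
   are modular, and for p >= 5 they have Z_(p) coefficients.  By induction on n,
     D^n f = sum_(j <= n) C(n, j) (k + n - 1)(k + n - 2)...(k + n - j) E^j G_(n-j),
   and n divides C(n, j) (k + n - 1)...(k + n - j) for j > 0.  For n = p^2 every
   term with j > 0 therefore lies in p^2 Z_(p)[P,Q,R], while the term j = 0 is the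
   modular form G_(p^2), which does not involve P. *)

Section LocalizationAtPrime.

Variable p : nat.
Hypothesis p_prime : prime p.

Lemma in_Zp_frac (a d : int) : ~~ (p %| `|d|)%N -> in_Zp p (a%:~R / d%:~R).
Proof.
rewrite /in_Zp; case: divqP => [|c x c_neq0]; first by rewrite dvdn0.
by rewrite abszM Euclid_dvdM // negb_or => /andP[].
Qed.

Lemma in_Zp_int (a : int) : in_Zp p a%:~R.
Proof.
by rewrite -[a%:~R]divr1 -[1]/(1%:~R); apply: in_Zp_frac; rewrite dvdn1 neq_ltn prime_gt1 ?orbT.
Qed.

Lemma in_Zp_nat n : in_Zp p n%:R.
Proof. exact: (in_Zp_int n). Qed.

Lemma in_Zp0 : in_Zp p 0.
Proof. exact: (in_Zp_nat 0). Qed.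

Lemma in_ZpD x y : in_Zp p x -> in_Zp p y -> in_Zp p (x + y).
Proof.
move=> px py; rewrite -[x]divq_num_den -[y]divq_num_den.
have dx := denq_neq0 x; have dy := denq_neq0 y.
have -> : (numq x)%:~R / (denq x)%:~R + (numq y)%:~R / (denq y)%:~R
    = (numq x * denq y + numq y * denq x)%:~R / (denq x * denq y)%:~R :> rat.
  by rewrite !rmorphD !rmorphM /=; field; rewrite !intr_eq0 dx dy.
by apply: in_Zp_frac; rewrite abszM Euclid_dvdM // negb_or; apply/andP.
Qed.

Lemma in_ZpM x y : in_Zp p x -> in_Zp p y -> in_Zp p (x * y).
Proof.
move=> px py; rewrite -[x]divq_num_den -[y]divq_num_den.
have dx := denq_neq0 x; have dy := denq_neq0 y.
have -> : (numq x)%:~R / (denq x)%:~R * ((numq y)%:~R / (denq y)%:~R)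
    = (numq x * numq y)%:~R / (denq x * denq y)%:~R :> rat.
  by rewrite !rmorphM /=; field; rewrite !intr_eq0 dx dy.
by apply: in_Zp_frac; rewrite abszM Euclid_dvdM // negb_or; apply/andP.
Qed.

Lemma in_ZpN x : in_Zp p x -> in_Zp p (- x).
Proof. by rewrite /in_Zp denqN. Qed.

Lemma in_ZpB x y : in_Zp p x -> in_Zp p y -> in_Zp p (x - y).
Proof. by move=> px py; apply: in_ZpD => //; apply: in_ZpN. Qed.

Lemma in_ZpMn x n : in_Zp p x -> in_Zp p (x *+ n).
Proof. by move=> px; rewrite -mulr_natr; apply: in_ZpM => //; apply: in_Zp_nat. Qed.

Lemma in_Zp_sum (I : Type) (r : seq I) (P : pred I) (F : I -> rat) :
  (forall i, P i -> in_Zp p (F i)) -> in_Zp p (\sum_(i <- r | P i) F i).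
Proof. by move=> PF; apply: (big_ind (in_Zp p)); [exact: in_Zp0 | exact: in_ZpD |]. Qed.

Lemma in_Zp_invn n : ~~ (p %| n)%N -> in_Zp p n%:R^-1.
Proof. by move=> p_n; rewrite -div1r -[1]/(1%:~R); apply: (@in_Zp_frac 1 n). Qed.

Lemma in_Zp_inv_dvd144 n : (5 <= p)%N -> (n %| 144)%N -> in_Zp p n%:R^-1.
Proof.
move=> p_ge5 n_144; apply: in_Zp_invn; apply: contraTN n_144 => p_n.
apply/negP => /(dvdn_trans p_n); rewrite (_ : 144 = 2 ^ 4 * 3 ^ 2)%N //.
by rewrite Euclid_dvdM // !Euclid_dvdX // !gtnNdvd //; lia.
Qed.

Lemma in_pZp_natM e y : in_Zp p y -> in_pZp p e ((p ^ e)%:R * y).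
Proof.
rewrite /in_Zp -[y in _ * y]divq_num_den mulrA -[(p ^ e)%:R]/((p ^ e)%N%:~R) -rmorphM /=.
move: (denq y) (denq_neq0 y) => d d_neq0.
move def_a : ((p ^ e)%N%:Z * numq y)%R => a.
have p_a : (p ^ e %| `|a|)%N by rewrite -def_a abszM dvdn_mulr.
rewrite /in_pZp /in_Zp; move: p_a.
case: divqP => [/eqP|c x c_neq0]; first by rewrite (negbTE d_neq0).
rewrite !abszM (Euclid_dvdM _ _ p_prime) negb_or => p_cx /andP[p_c ->].
by rewrite -(Gauss_dvdr _ (coprimeXl e (_ : coprime p `|c|))) // prime_coprime.
Qed.

End LocalizationAtPrime.

Local Notation mpoly3 := {mpoly rat[3]}.

Lemma Dq_is_linear : linear Dq.
Proof.
move=> c x y; rewrite /Dq scaler_sumr -big_split; apply: eq_bigr => i _ /=.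
by rewrite linearP /= mulrDl scalerAl.
Qed.

HB.instance Definition _ :=
  GRing.isLinear.Build rat mpoly3 mpoly3 *:%R Dq Dq_is_linear.

Lemma DqM x y : Dq (x * y) = Dq x * y + x * Dq y.
Proof.
rewrite /Dq mulr_suml mulr_sumr -big_split; apply: eq_bigr => i _ /=.
by rewrite mderivM mulrDl mulrAC mulrA.
Qed.

Lemma DqC c : Dq c%:MP = 0.
Proof. by rewrite /Dq big1 // => i _; rewrite mderivC mul0r. Qed.

Lemma Dq_exp x n : Dq (x ^+ n) = (x ^+ n.-1 * Dq x) *+ n.
Proof.
elim: n => [|n IH]; first by rewrite expr0 -mpolyC1 DqC mulr0n.
by rewrite exprS DqM IH; case: n {IH} => [|n]; rewrite ?mulr0n ?expr0 /= ?exprS; ring.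
Qed.

Lemma DqX i : Dq 'X_i = Dimg i.
Proof.
rewrite /Dq (bigD1 i) //= big1 => [|j j_neq_i]; last first.
  by rewrite mderivX mnm1E eq_sym (negbTE j_neq_i) scale0r mul0r.
rewrite mderivX mnm1E eqxx scale1r addr0 (_ : (U_(i) - U_(i) = 0)%MM) ?mpolyX0 ?mul1r //.
by apply/mnmP => j; rewrite !mnmE subnn.
Qed.

Definition P12 : mpoly3 := 12%:R^-1 *: 'X_vP.
Definition Q144 : mpoly3 := 144%:R^-1 *: 'X_vQ.

Definition serre (w : nat) (h : mpoly3) : mpoly3 := Dq h - (P12 * h) *+ w.

Lemma Dq_P12 : Dq P12 = P12 ^+ 2 - Q144.
Proof.
rewrite /P12 /Q144 linearZ /= DqX /Dimg /= -!mul_mpolyC.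
have -> : (144%:R^-1 : rat) = 12%:R^-1 ^+ 2 by field.
by rewrite rmorphXn /=; ring.
Qed.

Lemma Dq_Q : Dq 'X_vQ = (P12 * 'X_vQ) *+ 4 - 3%:R^-1 *: 'X_vR.
Proof.
rewrite DqX /Dimg /= /P12 -!mul_mpolyC.
have -> : (3%:R^-1 : rat) = 12%:R^-1 *+ 4 by field.
by rewrite rmorphMn /=; ring.
Qed.

Lemma Dq_R : Dq 'X_vR = (P12 * 'X_vR) *+ 6 - 2%:R^-1 *: 'X_vQ ^+ 2.
Proof.
rewrite DqX /Dimg /= /P12 -!mul_mpolyC.
have -> : (2%:R^-1 : rat) = 12%:R^-1 *+ 6 by field.
by rewrite rmorphMn /=; ring.
Qed.

Lemma serre_is_linear w : linear (serre w).
Proof. by move=> c x y; rewrite /serre linearP /= -!mul_mpolyC; ring. Qed.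

Definition monoQR (a b : nat) : mpoly3 := 'X_vQ ^+ a * 'X_vR ^+ b.

Lemma serre_monoQR a b : serre (4 * a + 6 * b) (monoQR a b) =
  (- 3%:R^-1) *: monoQR a.-1 b.+1 *+ a + (- 2%:R^-1) *: monoQR a.+2 b.-1 *+ b.
Proof.
rewrite /serre /monoQR DqM !Dq_exp Dq_Q Dq_R -!mul_mpolyC.
by case: a => [|a]; case: b => [|b]; rewrite /= ?mulr0n ?expr0 ?exprS; ring.
Qed.

Section IntegralCoefficients.

Variable p : nat.
Hypothesis p_prime : prime p.

Definition Zp_coefs (h : mpoly3) := forall m, in_Zp p h@_m.

Lemma Zp_coefsB x y : Zp_coefs x -> Zp_coefs y -> Zp_coefs (x - y).
Proof. by move=> px py m; rewrite mcoeffB; apply: in_ZpB. Qed.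

Lemma Zp_coefsMn x n : Zp_coefs x -> Zp_coefs (x *+ n).
Proof. by move=> px m; rewrite mcoeffMn; apply: in_ZpMn. Qed.

Lemma Zp_coefsZ c x : in_Zp p c -> Zp_coefs x -> Zp_coefs (c *: x).
Proof. by move=> pc px m; rewrite mcoeffZ; apply: in_ZpM. Qed.

Lemma Zp_coefsM x y : Zp_coefs x -> Zp_coefs y -> Zp_coefs (x * y).
Proof.
by move=> px py m; rewrite mcoeffM; apply: in_Zp_sum => // k _; apply: in_ZpM.
Qed.

Lemma Zp_coefs_mpolyX m : Zp_coefs 'X_[m].
Proof. by move=> m'; rewrite mcoeffX; apply: in_Zp_nat. Qed.

Lemma Zp_coefsX x n : Zp_coefs x -> Zp_coefs (x ^+ n).
Proof.
move=> px; elim: n => [|n IH]; first by rewrite expr0 -mpolyX0; apply: Zp_coefs_mpolyX.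
by rewrite exprS; apply: Zp_coefsM.
Qed.

Lemma Zp_coefs_mderiv i x : Zp_coefs x -> Zp_coefs (mderiv i x).
Proof. by move=> px m; rewrite mcoeff_mderiv; apply: in_ZpMn. Qed.

Hypothesis p_ge5 : (5 <= p)%N.

Lemma Zp_coefs_Dimg i : Zp_coefs (Dimg i).
Proof.
have pX j : Zp_coefs 'X_j := Zp_coefs_mpolyX U_(j).
have pXX j l : Zp_coefs ('X_j * 'X_l) by apply: Zp_coefsM.
have [i12 i3 i2] : [/\ in_Zp p 12%:R^-1, in_Zp p 3%:R^-1 & in_Zp p 2%:R^-1].
  by split; apply: in_Zp_inv_dvd144.
rewrite /Dimg; case: ifP => _; [|case: ifP => _]; rewrite -?expr2.
- by apply: Zp_coefsZ i12 (Zp_coefsB (Zp_coefsX 2 (pX _)) (pX _)).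
- by apply: Zp_coefsZ i3 (Zp_coefsB (pXX _ _) (pX _)).
- by apply: Zp_coefsZ i2 (Zp_coefsB (pXX _ _) (Zp_coefsX 2 (pX _))).
Qed.

Lemma Zp_coefs_Dq x : Zp_coefs x -> Zp_coefs (Dq x).
Proof.
move=> px m; rewrite /Dq raddf_sum /=; apply: in_Zp_sum => // i _.
by apply: Zp_coefsM; [apply: Zp_coefs_mderiv | apply: Zp_coefs_Dimg].
Qed.

Lemma Zp_coefs_P12 : Zp_coefs P12.
Proof. by apply: Zp_coefsZ => //; [apply: in_Zp_inv_dvd144 | apply: Zp_coefs_mpolyX]. Qed.

Lemma Zp_coefs_Q144 : Zp_coefs Q144.
Proof. by apply: Zp_coefsZ => //; [apply: in_Zp_inv_dvd144 | apply: Zp_coefs_mpolyX]. Qed.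

Lemma Zp_coefs_serre w h : Zp_coefs h -> Zp_coefs (serre w h).
Proof.
move=> ph; apply: Zp_coefsB => //; first by apply: Zp_coefs_Dq.
by apply: Zp_coefsMn => //; apply: Zp_coefsM => //; apply: Zp_coefs_P12.
Qed.

End IntegralCoefficients.

Definition QR_weight (w : nat) (m : 'X_{1..3}) : Prop :=
  m vP = 0%N /\ (4 * m vQ + 6 * m vR)%N = w.

Section ModularForms.

Variable w : nat.

Lemma is_modform0 : is_modform w 0.
Proof. by move=> m; rewrite msupp0. Qed.

Lemma is_modformD x y : is_modform w x -> is_modform w y -> is_modform w (x + y).
Proof. by move=> wx wy m /msuppD_le; rewrite mem_cat => /orP[/wx | /wy]. Qed.

Lemma is_modformZ c x : is_modform w x -> is_modform w (c *: x).
Proof. by move=> wx m /msuppZ_le /wx. Qed.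

Lemma is_modformB x y : is_modform w x -> is_modform w y -> is_modform w (x - y).
Proof. by move=> wx wy; rewrite -scaleN1r; apply: is_modformD => //; apply: is_modformZ. Qed.

Lemma is_modformMn x n : is_modform w x -> is_modform w (x *+ n).
Proof. by rewrite -scaler_nat; apply: is_modformZ. Qed.

Lemma is_modform_sum (I : Type) (r : seq I) (P : pred I) (F : I -> mpoly3) :
  (forall i, P i -> is_modform w (F i)) -> is_modform w (\sum_(i <- r | P i) F i).
Proof.
by move=> wF; apply: (big_ind (is_modform w)); [exact: is_modform0 | exact: is_modformD |].
Qed.

End ModularForms.

Lemma is_modform_linear w w' (phi : mpoly3 -> mpoly3) h : linear phi ->
  (forall m, QR_weight w m -> is_modform w' (phi 'X_[m])) ->
  is_modform w h -> is_modform w' (phi h).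
Proof.
move=> phi_lin phiX wh.
pose phiL : {linear mpoly3 -> mpoly3} := HB.pack phi (GRing.isLinear.Build _ _ _ _ phi phi_lin).
rewrite (mpolyE h) big_seq -[phi _]/(phiL _) linear_sum; apply: is_modform_sum => m m_h.
by rewrite linearZ; apply: is_modformZ; apply: phiX; apply: wh.
Qed.

Lemma monoQR_modform a b : is_modform (4 * a + 6 * b) (monoQR a b).
Proof.
rewrite /monoQR !mpolyXn -mpolyXD => m /mem_msuppXP <-.
by rewrite !mnmDE !mulmnE !mnm1E !eqxx /=; split; lia.
Qed.

Lemma mpolyX_monoQR (m : 'X_{1..3}) : m vP = 0%N -> 'X_[m] = monoQR (m vQ) (m vR).
Proof.
move=> m_P; rewrite /monoQR !mpolyXn -mpolyXD; congr 'X_[_]; apply/mnmP => i.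
rewrite !mnmDE !mulmnE !mnm1E.
case: i => [[|[|[|i]]] lt_i3] //=; rewrite ?mul0n ?mul1n ?addn0 ?add0n.
  by rewrite -[RHS]m_P; congr (m _); apply: val_inj.
all: by congr (m _); apply: val_inj.
Qed.

Lemma serre_modform w h : is_modform w h -> is_modform (w + 2) (serre w h).
Proof.
move=> wh; apply: (is_modform_linear (serre_is_linear w) _ wh) => m [m_P <-].
rewrite mpolyX_monoQR // serre_monoQR.
apply: is_modformD.
- case: (m vQ) => [|a]; first by rewrite mulr0n; apply: is_modform0.
  apply: is_modformMn; apply: is_modformZ.
  by rewrite (_ : _ + 2 = 4 * a + 6 * (m vR).+1)%N; [apply: monoQR_modform | lia].
- case: (m vR) => [|b]; first by rewrite mulr0n; apply: is_modform0.
  apply: is_modformMn; apply: is_modformZ.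
  by rewrite (_ : _ + 2 = 4 * (m vQ).+2 + 6 * b)%N; [apply: monoQR_modform | lia].
Qed.

Lemma Q144M_modform w h : is_modform w h -> is_modform (w + 4) (Q144 * h).
Proof.
have Q144M_linear : linear (fun x : mpoly3 => Q144 * x).
  by move=> c x y; rewrite mulrDr scalerAr.
apply: is_modform_linear Q144M_linear _ => m [m_P <-].
rewrite mpolyX_monoQR // /Q144 -scalerAl; apply: is_modformZ.
rewrite (_ : 'X_vQ * _ = monoQR (m vQ).+1 (m vR)); last by rewrite /monoQR exprS mulrA.
by rewrite (_ : _ + 4 = 4 * (m vQ).+1 + 6 * m vR)%N; [apply: monoQR_modform | lia].
Qed.

Definition serre_coef (k m : nat) : nat := (m * (k + m - 1))%N.

(* The pair (G_m, G_(m-1)); the value taken for G_(-1) only ever meets the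
   coefficient serre_coef k 0 = 0. *)
Fixpoint serre_pair (k : nat) (f : mpoly3) (m : nat) : mpoly3 * mpoly3 :=
  if m is m'.+1 then
    let G := serre_pair k f m' in
    (serre (k + 2 * m') G.1 - (Q144 * G.2) *+ serre_coef k m', G.1)
  else (f, 0).

Definition serre_seq k f m := (serre_pair k f m).1.

Section SerreSequence.

Variables (k : nat) (f : mpoly3).
Local Notation G := (serre_seq k f).

Lemma serre_seqS m :
  G m.+1 = serre (k + 2 * m) (G m) - (Q144 * G m.-1) *+ serre_coef k m.
Proof. by case: m => [|m] //; rewrite /serre_seq /= /serre_coef !mul0n !mulr0n. Qed.

Lemma Dq_serre_seq m :
  Dq (G m) = G m.+1 + (P12 * G m) *+ (k + 2 * m) + (Q144 * G m.-1) *+ serre_coef k m.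
Proof. by rewrite serre_seqS /serre; ring. Qed.

Lemma serre_seq_modform : is_modform k f -> forall m, is_modform (k + 2 * m) (G m).
Proof.
move=> kf m; suff [] : is_modform (k + 2 * m) (G m) /\ is_modform (k + 2 * m.+1) (G m.+1) by [].
elim: m => [|m [IHm IHm1]].
  rewrite serre_seqS /serre_coef mul0n mulr0n subr0 !muln0 addn0.
  by split=> //; apply: serre_modform.
split=> //; rewrite serre_seqS; apply: is_modformB.
  by rewrite (_ : _ + _ = k + 2 * m.+1 + 2)%N; [apply: serre_modform | lia].
by apply: is_modformMn; rewrite (_ : _ + _ = k + 2 * m + 4)%N; [apply: Q144M_modform | lia].
Qed.

Lemma Zp_coefs_serre_seq p : prime p -> (5 <= p)%N ->
  Zp_coefs p f -> forall m, Zp_coefs p (G m).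
Proof.
move=> p_prime p_ge5 pf m.
suff [] : Zp_coefs p (serre_pair k f m).1 /\ Zp_coefs p (serre_pair k f m).2 by [].
elim: m => [|m [IH1 IH2]] /=; first by split=> // m; rewrite mcoeff0; apply: in_Zp0.
split=> //; apply: Zp_coefsB => //; first by apply: Zp_coefs_serre.
by apply: Zp_coefsMn => //; apply: Zp_coefsM => //; apply: Zp_coefs_Q144.
Qed.

End SerreSequence.

(* The truncated subtraction in k + n - 1 only matters for k = n = 0, where
   'C(0, j) = 0 for j > 0. *)
Definition Dpow_coef (k n j : nat) : nat := ('C(n, j) * (k + n - 1) ^_ j)%N.

Lemma Dpow_coef0 k n : Dpow_coef k n 0 = 1%N.
Proof. by rewrite /Dpow_coef bin0 ffactn0. Qed.

Lemma Dpow_coef_small k n j : (n < j)%N -> Dpow_coef k n j = 0%N.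
Proof. by move=> lt_nj; rewrite /Dpow_coef bin_small. Qed.

Lemma Dpow_coefS k n j : (j <= n)%N ->
  Dpow_coef k n.+1 j.+1 = (Dpow_coef k n j.+1 + (j + (k + 2 * (n - j))) * Dpow_coef k n j)%N.
Proof.
move=> le_jn; rewrite /Dpow_coef binS.
case def_x : (k + n)%N => [|x].
  have [k0 n0] : k = 0 /\ n = 0 by lia.
  by rewrite k0 n0 (_ : j = 0) //; lia.
have -> : (k + n.+1 - 1 = x.+1)%N by lia.
have -> : (x.+1 - 1 = x)%N by lia.
have bin_rec := mul_bin_left n j.
rewrite ffactSS ffactnSr; case: (leqP j x) => [le_jx | lt_xj]; last by rewrite ffact_small //; lia.
nia.
Qed.

Lemma Dpow_coef_serre k n j : (j < n)%N ->
  (j.+1 * Dpow_coef k n j.+1 = serre_coef k (n - j) * Dpow_coef k n j)%N.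
Proof.
move=> lt_jn; rewrite /Dpow_coef /serre_coef ffactnSr mulnA mul_bin_left.
rewrite (_ : k + n - 1 - j = k + (n - j) - 1)%N; last by lia.
ring.
Qed.

Lemma dvdn_bin_ffact n x j : (0 < j)%N -> (n %| 'C(n, j) * x ^_ j)%N.
Proof.
case: j => [|j] // _; rewrite -bin_ffact factS.
have -> : ('C(n, j.+1) * ('C(x, j.+1) * (j.+1 * j`!))
    = n * ('C(n.-1, j) * 'C(x, j.+1) * j`!))%N by rewrite !mulnA mul_bin_diag; ring.
exact: dvdn_mulr.
Qed.

Section IteratedDerivative.

Variables (k : nat) (f : mpoly3).
Local Notation G := (serre_seq k f).

Lemma Dq_expansion_term n j : (j <= n)%N ->
  Dq (P12 ^+ j * G (n - j)) =
    (P12 ^+ j.+1 * G (n - j)) *+ (j + (k + 2 * (n - j))) + P12 ^+ j * G (n.+1 - j)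
  - (Q144 * (P12 ^+ j.-1 * G (n - j))) *+ j
  + (Q144 * (P12 ^+ j * G (n - j).-1)) *+ serre_coef k (n - j).
Proof.
move=> le_jn; rewrite DqM Dq_exp Dq_P12 Dq_serre_seq subSn //.
by case: j le_jn => [|j] _ /=; rewrite ?expr0 ?exprS; ring.
Qed.

Lemma expansion_Q144_cancel n :
  \sum_(0 <= j < n.+1) (Q144 * (P12 ^+ j.-1 * G (n - j))) *+ (j * Dpow_coef k n j) =
  \sum_(0 <= j < n.+1)
    (Q144 * (P12 ^+ j * G (n - j).-1)) *+ (serre_coef k (n - j) * Dpow_coef k n j).
Proof.
rewrite big_nat_recl // big_nat_recr //= mul0n mulr0n add0r subnn mul0n mulr0n addr0.
by apply: eq_big_nat => j /andP[_ lt_jn]; rewrite Dpow_coef_serre // subnS.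
Qed.

Lemma expansion_pascal n :
  \sum_(0 <= j < n.+2) (P12 ^+ j * G (n.+1 - j)) *+ Dpow_coef k n.+1 j =
  \sum_(0 <= j < n.+1) (P12 ^+ j.+1 * G (n - j)) *+ ((j + (k + 2 * (n - j))) * Dpow_coef k n j)
  + \sum_(0 <= j < n.+1) (P12 ^+ j * G (n.+1 - j)) *+ Dpow_coef k n j.
Proof.
rewrite big_nat_recl // [X in _ = _ + X]big_nat_recl // !Dpow_coef0 addrCA; congr (_ + _).
have -> : \sum_(0 <= j < n.+1) (P12 ^+ j.+1 * G (n.+1 - j.+1)) *+ Dpow_coef k n.+1 j.+1 =
    \sum_(0 <= j < n.+1) (P12 ^+ j.+1 * G (n - j)) *+ ((j + (k + 2 * (n - j))) * Dpow_coef k n j)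
  + \sum_(0 <= j < n.+1) (P12 ^+ j.+1 * G (n - j)) *+ Dpow_coef k n j.+1.
  rewrite -big_split; apply: eq_big_nat => j /andP[_ lt_jn].
  by rewrite Dpow_coefS // mulrnDr addrC subSS.
by rewrite [X in _ + X = _]big_nat_recr //= Dpow_coef_small // mulr0n addr0.
Qed.

Lemma iter_Dq_expansion n :
  iter n Dq f = \sum_(0 <= j < n.+1) (P12 ^+ j * G (n - j)) *+ Dpow_coef k n j.
Proof.
elim: n => [|n IH]; first by rewrite big_nat1 Dpow_coef0 expr0 mul1r.
rewrite iterS IH raddf_sum expansion_pascal.
transitivity (
  \sum_(0 <= j < n.+1) (P12 ^+ j.+1 * G (n - j)) *+ ((j + (k + 2 * (n - j))) * Dpow_coef k n j)
  + \sum_(0 <= j < n.+1) (P12 ^+ j * G (n.+1 - j)) *+ Dpow_coef k n j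
  - \sum_(0 <= j < n.+1) (Q144 * (P12 ^+ j.-1 * G (n - j))) *+ (j * Dpow_coef k n j)
  + \sum_(0 <= j < n.+1)
      (Q144 * (P12 ^+ j * G (n - j).-1)) *+ (serre_coef k (n - j) * Dpow_coef k n j)).
  rewrite -big_split -sumrB -big_split /=; apply: eq_big_nat => j /andP[_ lt_jn].
  by rewrite raddfMn /= Dq_expansion_term //; ring.
by rewrite (expansion_Q144_cancel n) subrK.
Qed.

End IteratedDerivative.

Theorem lemma3p10 (p k : nat) (f : {mpoly rat[3]}) :
  prime p -> (5 <= p)%N ->
  is_modform k f ->
  (forall n : nat, qcoef f n \is a Num.int) ->
  (forall m : 'X_{1..3}, in_Zp p f@_m) ->
  let g := iter (p ^ 2) Dq f in
  (forall m : 'X_{1..3}, in_Zp p g@_m) /\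
  (forall m : 'X_{1..3}, (0 < m vP)%N -> in_pZp p 2 g@_m).
Proof.
move=> p_prime p_ge5 f_mod _ f_Zp g.
split; first by rewrite /g; elim: (p ^ 2)%N => //= n; apply: Zp_coefs_Dq.
move=> m m_P; set n := (p ^ 2)%N.
have G_P0 j : (serre_seq k f j)@_m = 0.
  apply/eqP; rewrite -[_ == 0]negbK -mcoeff_msupp; apply/negP.
  by move=> /(serre_seq_modform f_mod) [m_P0 _]; rewrite m_P0 in m_P.
have -> : g@_m = n%:R * \sum_(0 <= j < n.+1)
    (P12 ^+ j * serre_seq k f (n - j))@_m *+ (Dpow_coef k n j %/ n).
  rewrite /g (iter_Dq_expansion k) raddf_sum /= mulr_sumr; apply: eq_big_nat => -[|j] _.
    by rewrite expr0 mul1r mcoeffMn G_P0 !mul0rn mulr0.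
  by rewrite mcoeffMn mulr_natl -mulrnA divnK // dvdn_bin_ffact.
apply: in_pZp_natM => //; apply: in_Zp_sum => // j _; apply: in_ZpMn => //.
apply: Zp_coefsM => //; first by apply: Zp_coefsX => //; apply: Zp_coefs_P12.
exact: Zp_coefs_serre_seq.
Qed.
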